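(* Under the same setting (with $d>k\geq1$, $\varepsilon\in(0,1)$, $A\succeq0$ symmetric with $\lambda_k>\lambda_{k+1}$, $\beta>0$ with $\lambda_k>2\sqrt\beta\geq\lambda_{k+1}$, $X_0\in\mathrm{St}(d,k)$ with $\cos\theta_k(U_k,X_0)>0$, and ANPM perturbations satisfying for all $t\geq0$: $\|U_{-k}^\top\Xi_t\|_2\leq c(\lambda_k-2\sqrt\beta)\varepsilon$ and $\|U_k^\top\Xi_t\|_2\leq c(\lambda_k-2\sqrt\beta)\cos\theta_k(U_k,X_t)$, $c=1/32$), for all $t\geq0$, $$H_t=p_t(\Lambda_{-k})H_0C_t^{-1}+\sum_{s=0}^{t-1}q_s(\Lambda_{-k})\Psi_{t-1-s}C_{t-1-s}C_t^{-1}.$$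
   Context: $A$ has eigenvalues $\lambda_1\geq\dots\geq\lambda_d\geq0$, orthonormal eigenvectors $u_i$; $U_k:=[u_1..u_k]$, $U_{-k}:=[u_{k+1}..u_d]$, $\Lambda_k:=\mathrm{diag}(\lambda_1..\lambda_k)$, $\Lambda_{-k}:=\mathrm{diag}(\lambda_{k+1}..\lambda_d)$. QR: $Y=XR$, $X^\top X=I_k$, $R$ upper triangular, nonnegative diagonal; $\theta_k(U,X):=\arccos\sigma_{\min}(U^\top X)$. ANPM: $(X_1,R_1)=\mathrm{QR}(\tfrac12AX_0+\Xi_0)$; for $t\geq1$, $Y_{t+1}=AX_t-\beta X_{t-1}R_t^{-1}+\Xi_t$, $(X_{t+1},R_{t+1})=\mathrm{QR}(Y_{t+1})$. $H_t:=(U_{-k}^\top X_t)(U_k^\top X_t)^{-1}$; $\Psi_t:=(U_{-k}^\top\Xi_t)(U_k^\top X_t)^{-1}$; $E_t:=\Lambda_k^{-1}(U_k^\top\Xi_t)(U_k^\top X_t)^{-1}$; $G_0:=(I_k/2+E_0)^{-1}$, $G_{t+1}:=(I_k-\beta\Lambda_k^{-1}G_t\Lambda_k^{-1}+E_{t+1})^{-1}$; $C_0:=I_k$, $C_t:=\Lambda_kG_{t-1}^{-1}\Lambda_kG_{t-2}^{-1}\cdots\Lambda_kG_0^{-1}$. Polynomials: $p_0=1$, $p_1(x)=x/2$, $p_{t+1}(x)=xp_t(x)-\beta p_{t-1}(x)$; $q_0=1$, $q_1(x)=x$, $q_{t+1}(x)=xq_t(x)-\beta q_{t-1}(x)$.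 *)

From HB Require Import structures.
From mathcomp Require Import all_boot all_order all_algebra.
From mathcomp Require Import classical_sets reals.
Set Implicit Arguments. Unset Strict Implicit. Unset Printing Implicit Defensive.
Import Order.TTheory GRing.Theory Num.Theory.
Local Open Scope ring_scope.
Local Open Scope classical_set_scope.

Section Defs.
Variable R : realType.

Definition vnorm n (v : 'cV[R]_n) : R := Num.sqrt (\sum_i v i 0 ^+ 2).

Definition opnorm p q (M : 'M[R]_(p, q)) : R :=
  sup [set vnorm (M *m v) | v in [set v : 'cV[R]_q | vnorm v = 1]].

(* smallest singular value of M (p x q, q <= p): inf_{|v|=1} |M v| *)
Definition smin p q (M : 'M[R]_(p, q)) : R :=
  inf [set vnorm (M *m v) | v in [set v : 'cV[R]_q | vnorm v = 1]].

(* cos theta_k(U, X) := cos(arccos sigma_min(U^T X)) = sigma_min(U^T X) *)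
Definition cos_theta d k (U X : 'M[R]_(d, k)) : R := smin (U^T *m X).

Definition upper_tri k (M : 'M[R]_k) : Prop :=
  forall i j : 'I_k, (j < i)%N -> M i j = 0.

Definition is_QR d k (Y Q : 'M[R]_(d, k)) (Rm : 'M[R]_k) : Prop :=
  [/\ Y = Q *m Rm, Q^T *m Q = 1%:M, upper_tri Rm & forall i, 0 <= Rm i i].

Definition mxpeval n (P : {poly R}) (M : 'M[R]_n) : 'M[R]_n :=
  \sum_(i < size P) P`_i *: M ^+ i.

Fixpoint ppoly (beta : R) (t : nat) : {poly R} * {poly R} :=
  (* returns (p_t, p_{t+1}) *)
  match t with
  | 0 => (1, 2^-1 *: 'X)
  | t'.+1 => let pr := ppoly beta t' in (pr.2, 'X * pr.2 - beta *: pr.1)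
  end.
Definition p_pol beta t := (ppoly beta t).1.

Fixpoint qpoly (beta : R) (t : nat) : {poly R} * {poly R} :=
  match t with
  | 0 => (1, 'X)
  | t'.+1 => let pr := qpoly beta t' in (pr.2, 'X * pr.2 - beta *: pr.1)
  end.
Definition q_pol beta t := (qpoly beta t).1.

Section Iterates.
Variables (k m : nat) (lam : nat -> R) (beta : R) (U : 'M[R]_(k + m))
  (X Xi : nat -> 'M[R]_(k + m, k)).

Definition Uk : 'M[R]_(k + m, k) := lsubmx U.
Definition Umk : 'M[R]_(k + m, m) := rsubmx U.
Definition Lk : 'M[R]_k := diag_mx (\row_(i < k) lam i).
Definition Lmk : 'M[R]_m := diag_mx (\row_(i < m) lam (k + i)%N).

Definition Hmat t := (Umk^T *m X t) *m invmx (Uk^T *m X t).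
Definition Psi t := (Umk^T *m Xi t) *m invmx (Uk^T *m X t).
Definition Emat t := invmx Lk *m (Uk^T *m Xi t) *m invmx (Uk^T *m X t).

Fixpoint Gmat t : 'M[R]_k :=
  match t with
  | 0 => invmx (2^-1%:M + Emat 0)
  | t'.+1 => invmx (1%:M - beta *: (invmx Lk *m Gmat t' *m invmx Lk) + Emat t)
  end.

Fixpoint Cmat t : 'M[R]_k :=
  match t with
  | 0 => 1%:M
  | t'.+1 => Lk *m invmx (Gmat t') *m Cmat t'
  end.
End Iterates.
End Defs.

(* Write a_t = U_k^T X_t and b_t = U_{-k}^T X_t, so that H_t = b_t a_t^-1, and let
   lam0 = lam k.-1 (the paper's lambda_k) and rho = sqrt beta / lam0 < 1/2.
   Projecting the ANPM recursion onto the two eigenspaces of A gives three-term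
   recursions for a_t R_t and b_t R_t.  The noise bound on U_k^T Xi_t gives
   ||E_t|| <= (1 - 2 rho) / 32, and then ||G_t^-1 v|| >= rho ||v|| propagates by
   induction, because beta Lk^-1 G_t Lk^-1 has norm at most beta / (lam0^2 rho) = rho.
   So every a_t, G_t^-1 and R_t is invertible and a_{t+1} R_{t+1} = Lk G_t^-1 a_t,
   i.e. a_{t+1}^-1 C_{t+1} = R_{t+1} a_t^-1 C_t.  Consequently K_t = H_t C_t obeys
   K_{t+2} = Lmk K_{t+1} - beta K_t + Psi_{t+1} C_{t+1}, K_1 = Lmk K_0 / 2 + Psi_0 C_0,
   and the claimed formula is the variation-of-constants solution of this
   recursion, p_t and q_s being its fundamental solutions. *)

From HB Require Import structures.
From mathcomp Require Import all_boot all_order all_algebra.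
From mathcomp Require Import classical_sets reals.
From mathcomp Require Import ring lra zify.
Import Order.TTheory GRing.Theory Num.Theory.
Local Open Scope ring_scope.

Set Implicit Arguments. Unset Strict Implicit. Unset Printing Implicit Defensive.

Section EuclideanNorm.
Variable R : realType.
Implicit Types (n p q : nat) (c d : R).

Lemma sqr_sum_mul_le n (f g : 'I_n -> R) :
  (\sum_i f i * g i) ^+ 2 <= (\sum_i f i ^+ 2) * (\sum_i g i ^+ 2).
Proof.
set F := \sum_i f i ^+ 2; set G := \sum_i g i ^+ 2; set S := \sum_i f i * g i.
have lagrange : \sum_i \sum_j (f i * g j - f j * g i) ^+ 2 = 2 * (F * G - S ^+ 2).
  have inner i : \sum_j (f i * g j - f j * g i) ^+ 2 =
      f i ^+ 2 * G + F * g i ^+ 2 - 2 * (f i * g i * S).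
    rewrite /F /G /S mulr_sumr mulr_suml mulr_sumr mulr_sumr -big_split -sumrB /=.
    by apply: eq_bigr => j _; ring.
  rewrite (eq_bigr _ (fun i _ => inner i)) sumrB big_split /=.
  by rewrite -!mulr_suml -!mulr_sumr -/F -/G -/S -mulr_suml -/S; ring.
have : 0 <= \sum_i \sum_j (f i * g j - f j * g i) ^+ 2.
  by do 2!(apply: sumr_ge0 => ? _); apply: sqr_ge0.
by rewrite lagrange pmulr_rge0 // subr_ge0.
Qed.

Lemma vnorm_ge0 n (v : 'cV[R]_n) : 0 <= vnorm v.
Proof. exact: sqrtr_ge0. Qed.

Lemma vnorm_sqr n (v : 'cV[R]_n) : vnorm v ^+ 2 = \sum_i v i 0 ^+ 2.
Proof. by rewrite sqr_sqrtr // sumr_ge0 // => i _; apply: sqr_ge0. Qed.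

Lemma vnorm_le n (v : 'cV[R]_n) c : 0 <= c -> \sum_i v i 0 ^+ 2 <= c ^+ 2 -> vnorm v <= c.
Proof. by move=> c0 le_vc; rewrite -(ger0_norm c0) -sqrtr_sqr ler_wsqrtr. Qed.

Lemma vnorm_eq0 n (v : 'cV[R]_n) : (vnorm v == 0) = (v == 0).
Proof.
rewrite -sqrf_eq0 vnorm_sqr psumr_eq0 => [|i _]; last exact: sqr_ge0.
apply/allP/eqP => [v0|-> i _]; last by rewrite mxE sqrf_eq0 eqxx.
apply/matrixP => i j; rewrite (ord1 j) mxE; apply/eqP.
by rewrite -sqrf_eq0; exact: v0 (mem_index_enum i).
Qed.

Lemma vnorm_gt0 n (v : 'cV[R]_n) : (0 < vnorm v) = (v != 0).
Proof. by rewrite lt_def vnorm_eq0 vnorm_ge0 andbT. Qed.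

Lemma vnorm0 n : vnorm (0 : 'cV[R]_n) = 0.
Proof. by apply/eqP; rewrite vnorm_eq0. Qed.

Lemma vnormZ n c (v : 'cV[R]_n) : vnorm (c *: v) = `|c| * vnorm v.
Proof.
rewrite /vnorm -sqrtr_sqr -sqrtrM ?sqr_ge0 // mulr_sumr.
by congr Num.sqrt; apply: eq_bigr => i _; rewrite mxE exprMn.
Qed.

Lemma vnormN n (v : 'cV[R]_n) : vnorm (- v) = vnorm v.
Proof. by rewrite -scaleN1r vnormZ normrN normr1 mul1r. Qed.

Lemma vnormD n (u w : 'cV[R]_n) : vnorm (u + w) <= vnorm u + vnorm w.
Proof.
apply: vnorm_le; first by rewrite addr_ge0 ?vnorm_ge0.
have -> : \sum_i (u + w) i 0 ^+ 2 =
    \sum_i u i 0 ^+ 2 + \sum_i w i 0 ^+ 2 + 2 * \sum_i u i 0 * w i 0.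
  rewrite mulr_sumr -!big_split /=; apply: eq_bigr => i _; rewrite mxE; ring.
have : \sum_i u i 0 * w i 0 <= vnorm u * vnorm w.
  apply: le_trans (ler_norm _) _.
  rewrite -ler_sqr ?nnegrE ?normr_ge0 ?mulr_ge0 ?vnorm_ge0 //.
  by rewrite real_normK ?num_real // exprMn !vnorm_sqr sqr_sum_mul_le.
rewrite sqrrD !vnorm_sqr; lra.
Qed.

Lemma lerB_vnormD n (u w : 'cV[R]_n) : vnorm u - vnorm w <= vnorm (u + w).
Proof. by have := vnormD (u + w) (- w); rewrite addrK vnormN; lra. Qed.

Lemma vnorm_mulmx_le p q (B : 'M[R]_(p, q)) (v : 'cV[R]_q) :
  vnorm (B *m v) <= Num.sqrt (\sum_i \sum_j B i j ^+ 2) * vnorm v.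
Proof.
apply: vnorm_le; first by rewrite mulr_ge0 ?sqrtr_ge0 ?vnorm_ge0.
rewrite exprMn sqr_sqrtr; last by do 2!(apply: sumr_ge0 => ? _); apply: sqr_ge0.
rewrite vnorm_sqr mulr_suml; apply: ler_sum => i _.
by rewrite mxE; apply: sqr_sum_mul_le.
Qed.

Lemma vnorm_normalize n (v : 'cV[R]_n) :
  v != 0 -> vnorm ((vnorm v)^-1 *: v) = 1.
Proof.
rewrite -vnorm_gt0 => v_gt0.
by rewrite vnormZ ger0_norm ?invr_ge0 ?vnorm_ge0 // mulVf ?gt_eqF.
Qed.

Lemma opnorm_mulmx_le p q (B : 'M[R]_(p, q)) (v : 'cV[R]_q) :
  vnorm (B *m v) <= opnorm B * vnorm v.
Proof.
have [->|v_neq0] := eqVneq v 0; first by rewrite mulmx0 !vnorm0 mulr0.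
have v_gt0 : 0 < vnorm v by rewrite vnorm_gt0.
have bounded : has_ubound [set vnorm (B *m u) | u in [set u | vnorm u = 1]].
  exists (Num.sqrt (\sum_i \sum_j B i j ^+ 2)) => _ [u /= u1 <-].
  by have := vnorm_mulmx_le B u; rewrite u1 mulr1.
have := ub_le_sup bounded (ex_intro2 _ _ _ (vnorm_normalize v_neq0) erefl).
rewrite -scalemxAr vnormZ ger0_norm ?invr_ge0 ?vnorm_ge0 //.
by rewrite ler_pdivrMl // mulrC.
Qed.

Lemma smin_mulmx_ge p q (M : 'M[R]_(p, q)) (v : 'cV[R]_q) :
  smin M * vnorm v <= vnorm (M *m v).
Proof.
have [->|v_neq0] := eqVneq v 0; first by rewrite mulmx0 !vnorm0 mulr0.
have v_gt0 : 0 < vnorm v by rewrite vnorm_gt0.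
have bounded : has_lbound [set vnorm (M *m u) | u in [set u | vnorm u = 1]].
  by exists 0 => _ [u _ <-]; apply: vnorm_ge0.
have := ge_inf bounded (ex_intro2 _ _ _ (vnorm_normalize v_neq0) erefl).
rewrite -scalemxAr vnormZ ger0_norm ?invr_ge0 ?vnorm_ge0 //.
by rewrite ler_pdivlMl // mulrC.
Qed.

Lemma vnorm_diag_mulmx_ge n (r : 'rV[R]_n) c (v : 'cV[R]_n) :
  0 <= c -> (forall i, c <= `|r 0 i|) -> c * vnorm v <= vnorm (diag_mx r *m v).
Proof.
move=> c0 r_ge; rewrite -ler_sqr ?nnegrE ?mulr_ge0 ?vnorm_ge0 //.
rewrite exprMn !vnorm_sqr mulr_sumr; apply: ler_sum => i _.
rewrite mul_diag_mx mxE exprMn ler_wpM2r ?sqr_ge0 //.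
by rewrite -[r 0 i ^+ 2]real_normK ?num_real // ler_sqr ?nnegrE ?normr_ge0.
Qed.

Lemma vnorm_mulmx_comp_le p q r (F : 'M[R]_(p, q)) (G : 'M[R]_(q, r)) c d :
  0 <= c -> (forall w, vnorm (F *m w) <= c * vnorm w) ->
  (forall w, vnorm (G *m w) <= d * vnorm w) ->
  forall w, vnorm (F *m G *m w) <= c * d * vnorm w.
Proof.
move=> c0 F_le G_le w; rewrite -mulmxA -mulrA.
exact: le_trans (F_le _) (ler_wpM2l c0 (G_le w)).
Qed.

Section LowerBound.
Variables (n : nat) (M : 'M[R]_n) (c : R).
Hypotheses (c_gt0 : 0 < c) (M_ge : forall v, c * vnorm v <= vnorm (M *m v)).

Lemma unitmx_of_vnorm_ge : M \in unitmx.
Proof.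
rewrite -unitmx_tr -row_free_unit; apply: inj_row_free => v vM0.
have Mv0 : M *m v^T = 0 by rewrite -[M]trmxK -trmx_mul vM0 trmx0.
have : c * vnorm v^T <= 0 by rewrite -(vnorm0 n) -Mv0.
rewrite pmulr_rle0 // => /(conj (vnorm_ge0 v^T))/andP; rewrite -eq_le eq_sym.
by rewrite vnorm_eq0 -trmx0 (inj_eq trmx_inj) => /eqP.
Qed.

Lemma vnorm_invmx_le v : vnorm (invmx M *m v) <= c^-1 * vnorm v.
Proof.
rewrite -(ler_pM2l c_gt0) mulrA mulfV ?gt_eqF // mul1r.
by have := M_ge (invmx M *m v); rewrite mulKVmx // unitmx_of_vnorm_ge.
Qed.

End LowerBound.

Lemma vnorm_scalar_addmx_ge n (P : 'M[R]_n) c d :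
  0 <= c -> (forall v, vnorm (P *m v) <= d * vnorm v) ->
  forall v, (c - d) * vnorm v <= vnorm ((c%:M + P) *m v).
Proof.
move=> c0 P_le v; rewrite mulmxDl mul_scalar_mx.
apply: le_trans (lerB_vnormD _ _); rewrite vnormZ ger0_norm // mulrBl.
exact: lerB.
Qed.

End EuclideanNorm.

Section MatrixPolynomial.
Variables (R : realType) (n : nat) (M : 'M[R]_n).

Lemma mxpeval_widen (P : {poly R}) N : (size P <= N)%N ->
  mxpeval P M = \sum_(i < N) P`_i *: M ^+ i.
Proof.
move=> le_PN; rewrite /mxpeval (big_ord_widen N (fun i => P`_i *: M ^+ i) le_PN).
rewrite big_mkcond /=; apply: eq_bigr => i _.
by case: ltnP => // le_Pi; rewrite nth_default // scale0r.
Qed.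

Lemma mxpevalB (P Q : {poly R}) : mxpeval (P - Q) M = mxpeval P M - mxpeval Q M.
Proof.
pose N := (size P + size Q)%N.
rewrite !(@mxpeval_widen _ N) ?leq_addl ?leq_addr //; last first.
  by rewrite (leq_trans (size_polyD _ _)) // size_polyN geq_max leq_addl leq_addr.
by rewrite -sumrB; apply: eq_bigr => i _; rewrite coefB scalerBl.
Qed.

Lemma mxpevalZ c (P : {poly R}) : mxpeval (c *: P) M = c *: mxpeval P M.
Proof.
rewrite !(@mxpeval_widen _ (size P)) ?size_scale_leq // scaler_sumr.
by apply: eq_bigr => i _; rewrite coefZ scalerA.
Qed.

Lemma mxpeval_mulX (P : {poly R}) : mxpeval ('X * P) M = M *m mxpeval P M.
Proof.
rewrite (@mxpeval_widen _ (size P).+1); last first.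
  by rewrite (leq_trans (size_polyMleq _ _)) // size_polyX.
rewrite big_ord_recl coefXM scale0r add0r mulmx_sumr.
by apply: eq_bigr => i _; rewrite coefXM -scalemxAr mulmxE -exprS.
Qed.

Lemma mxpevalC c : mxpeval c%:P M = c%:M.
Proof.
rewrite (@mxpeval_widen _ 1) ?size_polyC_leq1 // big_ord1 coefC expr0.
by rewrite -scalemx1.
Qed.

Lemma mxpevalX : mxpeval 'X M = M.
Proof. by rewrite -['X]mulr1 mxpeval_mulX -polyC1 mxpevalC mulmx1. Qed.

End MatrixPolynomial.

Section PolynomialRecurrence.
Variables (R : realType) (beta : R).

Lemma p_pol0 : p_pol beta 0 = 1. Proof. by []. Qed.
Lemma p_pol1 : p_pol beta 1 = 2^-1 *: 'X. Proof. by []. Qed.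
Lemma p_polSS t : p_pol beta t.+2 = 'X * p_pol beta t.+1 - beta *: p_pol beta t.
Proof. by []. Qed.
Lemma q_pol0 : q_pol beta 0 = 1. Proof. by []. Qed.
Lemma q_pol1 : q_pol beta 1 = 'X. Proof. by []. Qed.
Lemma q_polSS t : q_pol beta t.+2 = 'X * q_pol beta t.+1 - beta *: q_pol beta t.
Proof. by []. Qed.

End PolynomialRecurrence.

Section ThreeTermRecurrence.
Variables (R : realType) (n k : nat) (beta : R) (M : 'M[R]_n).
Variable W : nat -> 'M[R]_(n, k).

Let P t := mxpeval (p_pol beta t) M.
Let Q t := mxpeval (q_pol beta t) M.
Let conv t := \sum_(s < t) Q s *m W (t.-1 - s).

Let QSS t : Q t.+2 = M *m Q t.+1 - beta *: Q t.
Proof. by rewrite /Q q_polSS mxpevalB mxpeval_mulX mxpevalZ. Qed.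

Lemma conv_recurrence t : conv t.+2 = M *m conv t.+1 - beta *: conv t + W t.+1.
Proof.
have shift : \sum_(i < t) Q i.+2 *m W (t.+1 - i.+2) =
    M *m \sum_(i < t) Q i.+1 *m W (t - i.+1) - beta *: conv t.
  rewrite mulmx_sumr scaler_sumr -sumrB; apply: eq_bigr => i _.
  have -> : (t.-1 - i = t - i.+1)%N by lia.
  by rewrite QSS mulmxBl -scalemxAl mulmxA subSS.
rewrite {1 2}/conv !big_ord_recl /= /bump /= shift addn0 subn1 /=.
rewrite /Q q_pol0 q_pol1 mxpevalX -polyC1 mxpevalC !mul1mx !subn0 mulmxDr.
by rewrite addrC !addrA.
Qed.

Lemma three_term_solution (K : nat -> 'M[R]_(n, k)) :
  K 1%N = 2^-1 *: (M *m K 0%N) + W 0%N ->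
  (forall t, K t.+2 = M *m K t.+1 - beta *: K t + W t.+1) ->
  forall t, K t = P t *m K 0%N + conv t.
Proof.
move=> K1 KSS.
suff sol t : K t = P t *m K 0%N + conv t /\ K t.+1 = P t.+1 *m K 0%N + conv t.+1.
  by move=> t; case: (sol t).
elim: t => [|t [IH0 IH1]]; split => //.
- by rewrite /P p_pol0 -polyC1 mxpevalC mul1mx /conv big_ord0 addr0.
- rewrite K1 /P p_pol1 mxpevalZ mxpevalX /conv big_ord1 /Q q_pol0.
  by rewrite -polyC1 mxpevalC mul1mx scalemxAl.
- rewrite KSS IH0 IH1 conv_recurrence /P p_polSS mxpevalB mxpeval_mulX mxpevalZ.
  rewrite mulmxDr scalerDr mulmxBl mulmxA -scalemxAl.
  by rewrite opprD addrACA !addrA.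
Qed.

End ThreeTermRecurrence.

Section QuotientRecurrence.
Variables (F : fieldType) (k m : nat) (beta : F) (Lm : 'M[F]_m).
Variables (a Rm C : nat -> 'M[F]_k) (b Bm : nat -> 'M[F]_(m, k)).

Let K t := b t *m invmx (a t) *m C t.

Hypothesis a_C : forall t, invmx (a t.+1) *m C t.+1 = Rm t.+1 *m invmx (a t) *m C t.

Let quot_succ t : K t.+1 = b t.+1 *m Rm t.+1 *m (invmx (a t) *m C t).
Proof. by rewrite /K -mulmxA a_C !mulmxA. Qed.

Lemma quot_step0 : b 1%N *m Rm 1%N = 2^-1 *: (Lm *m b 0%N) + Bm 0%N ->
  K 1%N = 2^-1 *: (Lm *m K 0%N) + Bm 0%N *m invmx (a 0%N) *m C 0%N.
Proof. by move=> b_step0; rewrite quot_succ b_step0 mulmxDl -scalemxAl !mulmxA. Qed.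

Lemma quot_stepSS :
  (forall t, (0 < t)%N ->
     b t.+1 *m Rm t.+1 = Lm *m b t - beta *: (b t.-1 *m invmx (Rm t)) + Bm t) ->
  (forall t, Rm t.+1 \in unitmx) ->
  forall t, K t.+2 = Lm *m K t.+1 - beta *: K t + Bm t.+1 *m invmx (a t.+1) *m C t.+1.
Proof.
move=> b_stepS Rm_unit t.
have back : invmx (Rm t.+1) *m (invmx (a t.+1) *m C t.+1) = invmx (a t) *m C t.
  by rewrite a_C !mulmxA mulVmx // mul1mx.
rewrite quot_succ b_stepS // !mulmxDl mulNmx -scalemxAl -[b t *m _ *m _]mulmxA back.
by rewrite /K !mulmxA.
Qed.

End QuotientRecurrence.

Lemma eigen_blocks (R : realType) k m (U A : 'M[R]_(k + m)) (lam : nat -> R) :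
  U^T *m U = 1%:M -> A = U *m diag_mx (\row_(i < k + m) lam i) *m U^T ->
  (Uk U)^T *m A = Lk k lam *m (Uk U)^T /\
  (Umk U)^T *m A = Lmk k m lam *m (Umk U)^T.
Proof.
move=> U_orth A_eig.
have trU : U^T = col_mx (Uk U)^T (Umk U)^T by rewrite -tr_row_mx hsubmxK.
have lam_split : \row_(i < k + m) lam i =
    row_mx (\row_(i < k) lam i) (\row_(i < m) lam (k + i)%N).
  by apply/rowP => i; rewrite !mxE; case: splitP => j ->; rewrite mxE.
have : U^T *m A = diag_mx (\row_(i < k + m) lam i) *m U^T.
  by rewrite A_eig !mulmxA U_orth mul1mx.
rewrite trU mul_col_mx lam_split diag_mx_row mul_block_col !mul0mx addr0 add0r.
by case/eq_col_mx.
Qed.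

Section ANPM.
Variables (R : realType) (k m : nat) (beta : R) (A U : 'M[R]_(k + m)).
Variables (lam : nat -> R) (X Xi : nat -> 'M[R]_(k + m, k)) (Rm : nat -> 'M[R]_k).

Hypothesis X_step0 : X 1%N *m Rm 1%N = 2^-1 *: (A *m X 0%N) + Xi 0%N.
Hypothesis X_stepS : forall t, (0 < t)%N ->
  X t.+1 *m Rm t.+1 = A *m X t - beta *: (X t.-1 *m invmx (Rm t)) + Xi t.

Section Projection.
Variables (j : nat) (V : 'M[R]_(k + m, j)) (D : 'M[R]_j).
Hypothesis V_eig : V^T *m A = D *m V^T.

Lemma proj_step0 :
  V^T *m X 1%N *m Rm 1%N = 2^-1 *: (D *m (V^T *m X 0%N)) + V^T *m Xi 0%N.
Proof. by rewrite -mulmxA X_step0 mulmxDr -scalemxAr !mulmxA V_eig. Qed.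

Lemma proj_stepS t : (0 < t)%N ->
  V^T *m X t.+1 *m Rm t.+1 =
  D *m (V^T *m X t) - beta *: (V^T *m X t.-1 *m invmx (Rm t)) + V^T *m Xi t.
Proof.
by move=> t_gt0; rewrite -mulmxA X_stepS // mulmxDr mulmxBr -scalemxAr !mulmxA V_eig.
Qed.

End Projection.

Let L := Lk k lam.
Let a t := (Uk U)^T *m X t.
Let E t := Emat lam U X Xi t.
Let Ginv t := invmx (Gmat lam beta U X Xi t).

(* [invmx] is involutive even off [unitmx], so no invertibility is needed here. *)
Lemma Ginv0 : Ginv 0%N = 2^-1%:M + E 0%N.
Proof. exact: invmxK. Qed.

Lemma GinvS t :
  Ginv t.+1 = 1%:M - beta *: (invmx L *m invmx (Ginv t) *m invmx L) + E t.+1.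
Proof. by rewrite /Ginv !invmxK. Qed.

Hypothesis U_orth : U^T *m U = 1%:M.
Hypothesis A_eig : A = U *m diag_mx (\row_(i < k + m) lam i) *m U^T.

Let a_step0 : a 1%N *m Rm 1%N = 2^-1 *: (L *m a 0%N) + (Uk U)^T *m Xi 0%N.
Proof. exact: proj_step0 (eigen_blocks U_orth A_eig).1. Qed.

Let a_stepS t : (0 < t)%N ->
  a t.+1 *m Rm t.+1 = L *m a t - beta *: (a t.-1 *m invmx (Rm t)) + (Uk U)^T *m Xi t.
Proof. by move=> t_gt0; apply: (proj_stepS (eigen_blocks U_orth A_eig).1 t_gt0). Qed.

Let lam0 : R := lam k.-1.
Let sqrt_beta : R := Num.sqrt beta.
Let rho : R := sqrt_beta / lam0.
Hypothesis beta_gt0 : 0 < beta.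
Hypothesis lam0_gt : 2 * sqrt_beta < lam0.
Hypothesis lam_top : forall i, (i < k)%N -> lam0 <= lam i.
Hypothesis Xi_top : forall t,
  opnorm ((Uk U)^T *m Xi t) <= 32^-1 * (lam0 - 2 * sqrt_beta) * smin (a t).

Let sqrt_beta_gt0 : 0 < sqrt_beta. Proof. by rewrite sqrtr_gt0. Qed.
Let lam0_gt0 : 0 < lam0. Proof. by apply: lt_trans lam0_gt; rewrite mulr_gt0. Qed.
Let rho_gt0 : 0 < rho. Proof. by rewrite divr_gt0. Qed.
Let rho_lt_half : 2 * rho < 1.
Proof. by rewrite /rho mulrA ltr_pdivrMr // mul1r. Qed.
Let rho_margin0 : rho <= 2^-1 - (1 - 2 * rho) / 32.
Proof. by move: (rho) rho_lt_half => z; lra. Qed.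
Let rho_marginS : rho <= 1 - ((1 - 2 * rho) / 32 + rho).
Proof. by move: (rho) rho_lt_half => z; lra. Qed.

Lemma vnorm_Lk_ge v : lam0 * vnorm v <= vnorm (L *m v).
Proof.
apply: vnorm_diag_mulmx_ge (ltW lam0_gt0) _ => i.
have lam_ge := lam_top (ltn_ord i).
by rewrite mxE ger0_norm // (le_trans (ltW lam0_gt0)).
Qed.

Lemma Lk_unit : L \in unitmx.
Proof. exact: unitmx_of_vnorm_ge lam0_gt0 vnorm_Lk_ge. Qed.

Lemma vnorm_invLk_le v : vnorm (invmx L *m v) <= lam0^-1 * vnorm v.
Proof. exact: vnorm_invmx_le lam0_gt0 vnorm_Lk_ge v. Qed.

Lemma vnorm_Emat_le t v :
  a t \in unitmx -> vnorm (E t *m v) <= (1 - 2 * rho) / 32 * vnorm v.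
Proof.
move=> a_unit; set c := 32^-1 * (lam0 - 2 * sqrt_beta).
have c_ge0 : 0 <= c by rewrite mulr_ge0 ?invr_ge0 // subr_ge0 ltW.
have Ev : E t *m v = invmx L *m ((Uk U)^T *m Xi t *m (invmx (a t) *m v)).
  by rewrite /E /Emat !mulmxA.
have XiE : vnorm ((Uk U)^T *m Xi t *m (invmx (a t) *m v)) <= c * vnorm v.
  apply: le_trans (opnorm_mulmx_le _ _) _.
  apply: le_trans (ler_wpM2r (vnorm_ge0 _) (Xi_top t)) _.
  rewrite -/c -mulrA ler_wpM2l //.
  by have := smin_mulmx_ge (a t) (invmx (a t) *m v); rewrite mulKVmx.
rewrite Ev; apply: le_trans (vnorm_invLk_le _) _.
have -> : (1 - 2 * rho) / 32 = lam0^-1 * c by rewrite /c /rho; field; rewrite gt_eqF.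
by rewrite -mulrA ler_wpM2l // invr_ge0 ltW.
Qed.

Lemma vnorm_Ginv0_ge v : a 0%N \in unitmx -> rho * vnorm v <= vnorm (Ginv 0%N *m v).
Proof.
move=> a_unit; rewrite Ginv0.
apply: le_trans (vnorm_scalar_addmx_ge _ (fun v => vnorm_Emat_le v a_unit) v).
  by rewrite ler_wpM2r ?vnorm_ge0 // rho_margin0.
by rewrite invr_ge0.
Qed.

Lemma vnorm_GinvS_ge t : a t.+1 \in unitmx ->
  (forall v, rho * vnorm v <= vnorm (Ginv t *m v)) ->
  forall v, rho * vnorm v <= vnorm (Ginv t.+1 *m v).
Proof.
move=> a_unit Ginv_ge v.
set N := beta *: (invmx L *m invmx (Ginv t) *m invmx L).
have N_le w : vnorm (N *m w) <= rho * vnorm w.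
  have lam0V_ge0 : 0 <= lam0^-1 by rewrite invr_ge0 ltW.
  have rhoV_ge0 : 0 <= rho^-1 by rewrite invr_ge0 ltW.
  have invLG_le := vnorm_mulmx_comp_le lam0V_ge0 vnorm_invLk_le
    (vnorm_invmx_le rho_gt0 Ginv_ge).
  have le_w := vnorm_mulmx_comp_le (mulr_ge0 lam0V_ge0 rhoV_ge0) invLG_le vnorm_invLk_le w.
  have beta_rho : beta * (lam0^-1 / rho * lam0^-1) = rho.
    by rewrite /rho -(sqr_sqrtr (ltW beta_gt0)) -/sqrt_beta; field; rewrite !gt_eqF.
  rewrite /N -scalemxAl vnormZ gtr0_norm // -beta_rho -mulrA.
  by rewrite ler_wpM2l // ltW.
have P_le w : vnorm ((E t.+1 - N) *m w) <= ((1 - 2 * rho) / 32 + rho) * vnorm w.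
  rewrite mulmxBl mulrDl; apply: le_trans (vnormD _ _) _.
  by rewrite vnormN lerD ?vnorm_Emat_le ?N_le.
rewrite GinvS -/N addrAC -addrA.
apply: le_trans (vnorm_scalar_addmx_ge ler01 P_le v).
by rewrite ler_wpM2r ?vnorm_ge0 // rho_marginS.
Qed.

Lemma mulmx_Lk_Emat t : a t \in unitmx -> L *m E t *m a t = (Uk U)^T *m Xi t.
Proof.
move=> a_unit; rewrite /E /Emat -mulmxA mulmxKV // mulmxA.
by rewrite mulmxV ?Lk_unit // mul1mx.
Qed.

Lemma a_Rm_step0 : a 0%N \in unitmx -> a 1%N *m Rm 1%N = L *m Ginv 0%N *m a 0%N.
Proof.
move=> a_unit; rewrite a_step0 Ginv0 mulmxDr mul_mx_scalar mulmxDl -scalemxAl.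
by rewrite mulmx_Lk_Emat.
Qed.

Lemma a_Rm_stepS t :
  a t.+1 \in unitmx -> Ginv t \in unitmx -> Rm t.+1 \in unitmx ->
  a t.+1 *m Rm t.+1 = L *m Ginv t *m a t ->
  a t.+2 *m Rm t.+2 = L *m Ginv t.+1 *m a t.+1.
Proof.
move=> a_unit G_unit R_unit a_Rm.
have a_prev : L *m (invmx L *m invmx (Ginv t) *m invmx L) *m a t.+1 =
    a t *m invmx (Rm t.+1).
  rewrite -[a t.+1](mulmxK R_unit) a_Rm !mulmxA mulmxV ?Lk_unit // mul1mx.
  by rewrite mulmxKV ?Lk_unit // mulVmx // mul1mx.
rewrite a_stepS // GinvS mulmxDr mulmxBr mulmx1 !mulmxDl mulNmx mulmx_Lk_Emat //.
by rewrite -scalemxAr -scalemxAl a_prev.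
Qed.

Hypothesis a0_smin : 0 < smin (a 0%N).

Lemma anpm_invariant t :
  [/\ a t \in unitmx, forall v, rho * vnorm v <= vnorm (Ginv t *m v),
      Rm t.+1 \in unitmx & a t.+1 *m Rm t.+1 = L *m Ginv t *m a t].
Proof.
have next_unit u : a u \in unitmx ->
    (forall v, rho * vnorm v <= vnorm (Ginv u *m v)) ->
    a u.+1 *m Rm u.+1 = L *m Ginv u *m a u ->
  a u.+1 \in unitmx /\ Rm u.+1 \in unitmx.
  move=> a_unit G_ge a_Rm; apply/andP; rewrite -unitmx_mul a_Rm !unitmx_mul.
  by rewrite Lk_unit a_unit (unitmx_of_vnorm_ge rho_gt0 G_ge).
elim: t => [|t [a_unit G_ge R_unit a_Rm]].
  have a_unit : a 0%N \in unitmx.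
    exact: unitmx_of_vnorm_ge a0_smin (smin_mulmx_ge _).
  have G_ge := vnorm_Ginv0_ge ^~ a_unit; have a_Rm := a_Rm_step0 a_unit.
  by have [_ R_unit] := next_unit _ a_unit G_ge a_Rm; split.
have [a1_unit _] := next_unit _ a_unit G_ge a_Rm.
have G1_ge := vnorm_GinvS_ge a1_unit G_ge.
have a_Rm1 := a_Rm_stepS a1_unit (unitmx_of_vnorm_ge rho_gt0 G_ge) R_unit a_Rm.
by have [_ R1_unit] := next_unit _ a1_unit G1_ge a_Rm1; split.
Qed.

Let C t := Cmat lam beta U X Xi t.

Lemma Cmat_unit t : C t \in unitmx.
Proof.
elim: t => [|t IH]; first exact: unitmx1.
have [_ G_ge _ _] := anpm_invariant t.
by rewrite !unitmx_mul Lk_unit IH (unitmx_of_vnorm_ge rho_gt0 G_ge).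
Qed.

Lemma invmx_a_Cmat t : invmx (a t.+1) *m C t.+1 = Rm t.+1 *m invmx (a t) *m C t.
Proof.
have [a_unit _ _ a_Rm] := anpm_invariant t.
have [a1_unit _ _ _] := anpm_invariant t.+1.
have L_Ginv : L *m Ginv t = a t.+1 *m Rm t.+1 *m invmx (a t) by rewrite a_Rm mulmxK.
by rewrite /C /= -/(Ginv t) L_Ginv -[RHS](mulKmx a1_unit) !mulmxA.
Qed.

Let b t := (Umk U)^T *m X t.
Let Bm t := (Umk U)^T *m Xi t.

Let b_step0 : b 1%N *m Rm 1%N = 2^-1 *: (Lmk k m lam *m b 0%N) + Bm 0%N.
Proof. exact: proj_step0 (eigen_blocks U_orth A_eig).2. Qed.

Let b_stepS t : (0 < t)%N ->
  b t.+1 *m Rm t.+1 = Lmk k m lam *m b t - beta *: (b t.-1 *m invmx (Rm t)) + Bm t.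
Proof. by move=> t_gt0; apply: (proj_stepS (eigen_blocks U_orth A_eig).2 t_gt0). Qed.

Lemma Hmat_solution t :
  Hmat U X t =
    mxpeval (p_pol beta t) (Lmk k m lam) *m Hmat U X 0%N *m invmx (C t)
    + \sum_(s < t) mxpeval (q_pol beta s) (Lmk k m lam) *m Psi U X Xi (t.-1 - s)
        *m C (t.-1 - s) *m invmx (C t).
Proof.
have Rm_unit u : Rm u.+1 \in unitmx by case: (anpm_invariant u).
have := three_term_solution (W := fun j => Psi U X Xi j *m C j)
  (quot_step0 (Rm := Rm) (b := b) (Bm := Bm) invmx_a_Cmat b_step0)
  (quot_stepSS invmx_a_Cmat b_stepS Rm_unit) t.
rewrite mulmx1 => sol.
rewrite -[Hmat U X t](mulmxK (Cmat_unit t)) sol mulmxDl; congr (_ + _).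
by rewrite mulmx_suml; apply: eq_bigr => i _; rewrite !mulmxA.
Qed.

End ANPM.

Unset Implicit Arguments.
Set Strict Implicit.

Theorem lemma2 (R : realType) (k m : nat) (eps beta : R) (A U : 'M[R]_(k + m))
  (lam : nat -> R) (X Xi : nat -> 'M[R]_(k + m, k)) (Rm : nat -> 'M[R]_k) :
  (0 < k)%N -> (0 < m)%N ->
  0 < eps < 1 ->
  A^T = A ->
  U^T *m U = 1%:M ->
  A = U *m diag_mx (\row_(i < k + m) lam i) *m U^T ->
  (forall i j : nat, (i <= j)%N -> (j < k + m)%N -> lam j <= lam i) ->
  (forall i : nat, (i < k + m)%N -> 0 <= lam i) ->
  lam k.-1 > lam k ->
  0 < beta ->
  lam k.-1 > 2 * Num.sqrt beta -> 2 * Num.sqrt beta >= lam k ->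
  (X 0)^T *m X 0 = 1%:M ->
  cos_theta (Uk U) (X 0) > 0 ->
  is_QR (2^-1 *: (A *m X 0) + Xi 0) (X 1%N) (Rm 1%N) ->
  (forall t : nat, (1 <= t)%N ->
     is_QR (A *m X t - beta *: (X t.-1 *m invmx (Rm t)) + Xi t)
           (X t.+1) (Rm t.+1)) ->
  (forall t : nat,
     opnorm ((Umk U)^T *m Xi t)
       <= 32^-1 * (lam k.-1 - 2 * Num.sqrt beta) * eps) ->
  (forall t : nat,
     opnorm ((Uk U)^T *m Xi t)
       <= 32^-1 * (lam k.-1 - 2 * Num.sqrt beta) * cos_theta (Uk U) (X t)) ->
  forall t : nat,
    Hmat U X t =
      mxpeval (p_pol beta t) (Lmk k m lam) *m Hmat U X 0
        *m invmx (Cmat lam beta U X Xi t)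
      + \sum_(s < t)
          mxpeval (q_pol beta s) (Lmk k m lam) *m Psi U X Xi (t.-1 - s)
            *m Cmat lam beta U X Xi (t.-1 - s) *m invmx (Cmat lam beta U X Xi t).
Proof.
move=> _ _ _ _ U_orth A_eig lam_mono _ _ beta_gt0 lam_gt _ _ cos0.
move=> [/esym X_step0 _ _ _] QR _ Xi_top.
have X_stepS t : (0 < t)%N ->
    X t.+1 *m Rm t.+1 = A *m X t - beta *: (X t.-1 *m invmx (Rm t)) + Xi t.
  by move/QR => [->].
have lam_top i : (i < k)%N -> lam k.-1 <= lam i by move=> i_lt_k; apply: lam_mono; lia.
exact: Hmat_solution X_step0 X_stepS U_orth A_eig beta_gt0 lam_gt lam_top Xi_top cos0.
Qed.
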